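(* Let $\ell\ge 1$, $N=2^\ell$, and let $D$ be an $N\times N$ binary dyadic matrix. If $S=\mathrm{supp}(\sigma(D))\subseteq \mathbb{F}_2^\ell$ is a linear subspace of $\mathbb{F}_2^\ell$ or a coset ${\mathbf a}+U$ of a linear subspace $U$ of $\mathbb{F}_2^\ell$, then $\mathrm{rank}_{\mathbb{F}_2}(D)=N/|S|$.
   Context: Rows and columns of $N\times N$ binary matrices ($N=2^\ell$) are indexed by $\mathbb{F}_2^\ell$ via the bijection ${\mathbf x}=(x_1,\dots,x_\ell)\leftrightarrow 1+\sum_{i=1}^\ell x_i2^{i-1}\in\{1,\dots,N\}$. A matrix $D\in\mathbb{F}_2^{N\times N}$ is dyadic if $D_{{\mathbf x},{\mathbf y}}=D_{{\bf 0},{\mathbf x}+{\mathbf y}}$ for all ${\mathbf x},{\mathbf y}\in\mathbb{F}_2^\ell$. The signature $\sigma(D)\in\mathbb{F}_2^N$ is the row of $D$ indexed by ${\bf 0}$; its support $\mathrm{supp}(\sigma(D))$ (set of positions with nonzero entries) is viewed as a subset of $\mathbb{F}_2^\ell$ via the bijection. *)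

From HB Require Import structures.
From mathcomp Require Import all_boot all_order all_algebra.
Set Implicit Arguments. Unset Strict Implicit. Unset Printing Implicit Defensive.
Import GRing.Theory.
Local Open Scope ring_scope.

(* N = 2^l; indices 0..N-1 (0-based version of 1..N). *)
Lemma pow2_gt0 (l : nat) : (0 < 2 ^ l)%N.
Proof. by rewrite expn_gt0. Qed.

Definition idx0 (l : nat) : 'I_(2 ^ l) := Ordinal (pow2_gt0 l).

(* Bijection 'I_(2^l) -> F_2^l : i = sum_k x_k 2^k, x_k = k-th bit of i. *)
Definition vec_of (l : nat) (i : 'I_(2 ^ l)) : 'rV['F_2]_l :=
  \row_(k < l) (odd (i %/ 2 ^ k))%:R.

Definition dyadic (l : nat) (D : 'M['F_2]_(2 ^ l)) : Prop :=
  forall i j k : 'I_(2 ^ l), vec_of k = vec_of i + vec_of j -> D i j = D (idx0 l) k.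

(* Support of the signature (row indexed by 0), as a subset of F_2^l. *)
Definition sig_supp (l : nat) (D : 'M['F_2]_(2 ^ l)) : {set 'rV['F_2]_l} :=
  [set vec_of k | k in [pred k : 'I_(2 ^ l) | D (idx0 l) k != 0]].

From mathcomp Require Import all_boot all_order all_algebra all_field.
Import GRing.Theory.
Local Open Scope ring_scope.

(* A dyadic matrix has entries [D x y = 1] iff [x + y] lies in the support S of
   its signature.  If [S = a + U] for a subspace [U], fix a complement [W] of [U]
   and the projection [pi] onto [W] along [U]: then [x + y \in a + U] iff
   [pi (x - a) = pi (- y)], so [D] factors through the indicator vectors of the
   points of [W], as [D = A *m C] with [A] of width and [C] of height [#|W|].
   Both factors contain an identity block (take [x - a] resp. [- y] ranging
   over [W]), so they have full rank [#|W| = N / |U|] and so does [D]. *)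

Lemma natr_bool_inj (R : nzRingType) (b c : bool) : (b%:R : R) = c%:R -> b = c.
Proof. by case: b; case: c => // /eqP; rewrite ?oner_eq0 // eq_sym oner_eq0. Qed.

Lemma row_free_identity_cols {F : fieldType} {m n : nat} (M : 'M[F]_(m, n))
    (s : 'I_m -> 'I_n) :
  (forall k k', M k (s k') = (k == k')%:R) -> row_free M.
Proof.
move=> Ms; apply/row_freeP; exists (\matrix_(j, k) (j == s k)%:R).
apply/matrixP => k k'; rewrite !mxE (bigD1 (s k')) //= big1 ?addr0.
  by rewrite mxE eqxx mulr1 Ms.
by move=> j /negbTE sj; rewrite mxE sj mulr0.
Qed.

Lemma card_vspace_compl (F : finFieldType) l (U : {vspace 'rV[F]_l}) :
  #|(U^C)%VS| = (#|F| ^ l %/ #|U|)%N.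
Proof.
have dimf : \dim {: 'rV[F]_l}%VS = l by rewrite dimvf /dim /= mul1n.
have dimU : (\dim U <= l)%N by rewrite -[X in (_ <= X)%N]dimf dimvS ?subvf.
by rewrite !card_vspace dimv_compl dimf expnB //; apply/card_gt0P; exists 0.
Qed.

Section CosetIndicatorRank.
Context {F : finFieldType} {l m : nat} (U : {vspace 'rV[F]_l}) (a : 'rV[F]_l).
Context {f : 'I_m -> 'rV[F]_l}.
Hypothesis f_surj : forall x, exists i, f i = x.

Local Notation W := (U^C)%VS.
Local Notation pi := (daddv_pi W U).

Lemma daddv_pi_compl_id w : w \in W -> pi w = w.
Proof. by apply: daddv_pi_id; rewrite capvC capv_compl. Qed.

Lemma daddv_pi_compl_eq0 z : (pi z == 0) = (z \in U).
Proof.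
have piUz : daddv_pi U W z + pi z = z.
  by rewrite daddv_pi_add ?capv_compl // addv_complf memvf.
apply/eqP/idP => [pi0 | Uz]; first by rewrite -piUz pi0 addr0 memv_pi.
by move: piUz; rewrite daddv_pi_id ?capv_compl // => /(canRL (addKr z)); rewrite addNr.
Qed.

Lemma rank_coset_indicator (D : 'M[F]_m) :
  (forall i j, D i j = (f i + f j - a \in U)%:R) ->
  \rank D = (#|F| ^ l %/ #|U|)%N.
Proof.
move=> Dij; rewrite -card_vspace_compl; set n := #|W|.
pose w (k : 'I_n) : 'rV[F]_l := enum_val k.
have wW k : w k \in W by exact: enum_valP.
have sum_indicator p q : p \in W ->
    \sum_(k < n) (p == w k)%:R * (q == w k)%:R = (p == q)%:R :> F.
  move=> pW; rewrite (bigD1 (enum_rank_in pW p)) //= /w enum_rankK_in //.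
  rewrite eqxx mul1r big1 ?addr0 ?(eq_sym q) // => k kp.
  case: eqP => [pk | _]; last by rewrite mul0r.
  by case/eqP: kp; apply: enum_val_inj; rewrite enum_rankK_in.
pose A : 'M[F]_(m, n) := \matrix_(i, k) (pi (f i - a) == w k)%:R.
pose C : 'M[F]_(n, m) := \matrix_(k, j) (pi (- f j) == w k)%:R.
have DAC : D = A *m C.
  apply/matrixP => i j; rewrite Dij !mxE.
  under eq_bigr do rewrite !mxE.
  rewrite sum_indicator ?memv_pi // -subr_eq0 -linearB /= daddv_pi_compl_eq0.
  by rewrite opprK addrAC.
have [iA iAE] : exists iA : 'I_n -> 'I_m, forall k, f (iA k) = w k + a.
  exact: fin_all_exists (fun k => f_surj (w k + a)).
have [iC iCE] : exists iC : 'I_n -> 'I_m, forall k, f (iC k) = - w k.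
  exact: fin_all_exists (fun k => f_surj (- w k)).
have w_eq k k' : (w k' == w k) = (k == k') by rewrite (inj_eq enum_val_inj) eq_sym.
have freeA : row_free A^T.
  apply: (row_free_identity_cols _ iA) => k k'.
  by rewrite !mxE iAE addrK daddv_pi_compl_id // w_eq.
have freeC : row_free C.
  apply: (row_free_identity_cols _ iC) => k k'.
  by rewrite !mxE iCE opprK daddv_pi_compl_id // w_eq.
by rewrite DAC mxrankMfree // -mxrank_tr; apply/eqP.
Qed.

End CosetIndicatorRank.

Lemma bits_inj {l i j : nat} : (i < 2 ^ l)%N -> (j < 2 ^ l)%N ->
  (forall k, (k < l)%N -> odd (i %/ 2 ^ k) = odd (j %/ 2 ^ k)) -> i = j.
Proof.
elim: l i j => [|l IHl] i j; first by rewrite !ltnS !leqn0 => /eqP-> /eqP->.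
move=> ilt jlt bits_ij.
have odd_ij : odd i = odd j by have := bits_ij 0%N isT; rewrite !divn1.
have half_ij : i./2 = j./2.
  apply: IHl; rewrite -?divn2 ?ltn_divLR -?expnSr // => k kl.
  by rewrite -!divnMA -expnS; apply: bits_ij.
by rewrite -(odd_double_half i) -(odd_double_half j) odd_ij half_ij.
Qed.

Lemma F2_natr_neq0 (x : 'F_2) : (x != 0)%:R = x.
Proof. by case: x => [[|[|n]] xlt]; apply: val_inj. Qed.

Lemma vec_of_inj l : injective (@vec_of l).
Proof.
move=> i j /rowP vec_ij; apply/val_inj/(bits_inj (ltn_ord i) (ltn_ord j)).
by move=> k kl; have := vec_ij (Ordinal kl); rewrite !mxE => /natr_bool_inj.
Qed.

Lemma vec_of_surj {l} (x : 'rV['F_2]_l) : exists i, vec_of i = x.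
Proof.
have card_le : (#|{: 'rV['F_2]_l}| <= #|{: 'I_(2 ^ l)}|)%N.
  by rewrite card_mx card_Fp // mul1n card_ord.
by have /codomP[i ->] := inj_card_onto (@vec_of_inj l) card_le x; exists i.
Qed.

Lemma dyadicE l (D : 'M['F_2]_(2 ^ l)) : dyadic D ->
  forall i j, D i j = (vec_of i + vec_of j \in sig_supp D)%:R.
Proof.
move=> dyD i j; have [k vec_k] := vec_of_surj (vec_of i + vec_of j).
rewrite (dyD i j k vec_k) -vec_k mem_imset ?inE ?F2_natr_neq0 //.
exact: vec_of_inj.
Qed.

Theorem mainTheorem1 (l : nat) (D : 'M['F_2]_(2 ^ l)) :
  (1 <= l)%N -> dyadic D ->
  ((exists U : {vspace 'rV['F_2]_l}, sig_supp D = [set x | x \in U]) \/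
   (exists (a : 'rV['F_2]_l) (U : {vspace 'rV['F_2]_l}),
       sig_supp D = [set x | x - a \in U])) ->
  \rank D = (2 ^ l %/ #|sig_supp D|)%N.
Proof.
move=> _ dyD supp_subspace_or_coset.
have [a [U suppE]] : exists a (U : {vspace 'rV['F_2]_l}),
    sig_supp D = [set x | x - a \in U].
  case: supp_subspace_or_coset => [[U ->] | //]; exists 0, U.
  by apply/setP => x; rewrite !inE subr0.
have card_supp : #|sig_supp D| = #|U|.
  rewrite suppE -(card_imset _ (addIr (- a))); apply: eq_card => y.
  apply/imsetP/idP => [[x] | Uy]; first by rewrite inE => Ux ->.
  by exists (y + a); rewrite ?inE addrK.
rewrite card_supp (rank_coset_indicator U a vec_of_surj D) ?card_Fp // => i j.
by rewrite dyadicE // suppE inE.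
Qed.
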